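(* For every $\lambda\in\mathbb{R}$, the real $7$-dimensional Lie algebra $\mathfrak{n}_\lambda$ with basis $e_1,\dots,e_7$ whose nonzero brackets (up to antisymmetry) are $[e_1,e_2]=e_4$, $[e_1,e_3]=e_6$, $[e_1,e_4]=e_5$, $[e_1,e_5]=e_7$, $[e_2,e_3]=\lambda e_5$, $[e_2,e_4]=e_6$, $[e_2,e_6]=e_7$, $[e_3,e_4]=(1-\lambda)e_7$ is an Einstein nilradical.
   Context: A real nilpotent Lie algebra $\mathfrak{n}$ is called an Einstein nilradical if it admits an inner product such that the left-invariant Riemannian metric it defines on the simply connected nilpotent Lie group with Lie algebra $\mathfrak{n}$ is a nilsoliton, i.e. its Ricci operator satisfies $\mathrm{Ric}=c\,\mathrm{Id}+D$ for some $c\in\mathbb{R}$ and some derivation $D$ of $\mathfrak{n}$. Brackets of basis elements not listed are zero. *)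

From HB Require Import structures.
From mathcomp Require Import all_boot all_order all_algebra.
From mathcomp Require Import Rstruct.
Set Implicit Arguments. Unset Strict Implicit. Unset Printing Implicit Defensive.
Import Order.TTheory GRing.Theory Num.Theory.
Local Open Scope ring_scope.

Section MetricLie.
Variable F : realFieldType.
Variable n : nat.
Variable br : 'I_n -> 'I_n -> 'cV[F]_n.
Variable G : 'M[F]_n.

Definition lie (x y : 'cV[F]_n) : 'cV[F]_n :=
  \sum_(i < n) \sum_(j < n) (x i 0 * y j 0) *: br i j.

Definition ad_mx (x : 'cV[F]_n) : 'M[F]_n := \matrix_(k, j) (lie x (delta_mx j 0)) k 0.

Definition ip (x y : 'cV[F]_n) : F := (x^T *m G *m y) 0 0.

Definition is_inner_product : Prop :=
  G^T = G /\ forall x : 'cV[F]_n, x != 0 -> 0 < ip x x.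

(* metric adjoint of ad_x : <ad_x^* y, z> = <y, [x,z]> *)
Definition ad_adj (x y : 'cV[F]_n) : 'cV[F]_n := invmx G *m (ad_mx x)^T *m G *m y.

(* Levi-Civita connection of the left-invariant metric on left-invariant fields
   (Koszul formula): 2 nabla_x y = [x,y] - ad_x^* y - ad_y^* x *)
Definition nabla (x y : 'cV[F]_n) : 'cV[F]_n :=
  2^-1 *: (lie x y - ad_adj x y - ad_adj y x).

Definition curv (x y z : 'cV[F]_n) : 'cV[F]_n :=
  nabla x (nabla y z) - nabla y (nabla x z) - nabla (lie x y) z.

Definition ric (y z : 'cV[F]_n) : F :=
  \sum_(j < n) (curv (delta_mx j 0) y z) j 0.

(* Ricci operator Ric, defined by <Ric y, z> = ric(y, z) *)
Definition ricci_op : 'M[F]_n :=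
  invmx G *m (\matrix_(i, j) ric (delta_mx j 0) (delta_mx i 0)).

Definition is_derivation (D : 'M[F]_n) : Prop :=
  forall x y : 'cV[F]_n, D *m lie x y = lie (D *m x) y + lie x (D *m y).

Definition is_nilsoliton : Prop :=
  exists (c : F) (D : 'M[F]_n), is_derivation D /\ ricci_op = c%:M + D.
End MetricLie.

Definition einstein_nilradical (F : realFieldType) (n : nat)
    (br : 'I_n -> 'I_n -> 'cV[F]_n) : Prop :=
  exists G : 'M[F]_n, is_inner_product G /\ is_nilsoliton br G.

(* The algebra n_lambda; basis e_1..e_7 is indexed 0..6. *)
Definition e7 (k : nat) : 'cV[Rdefinitions.R]_7 := delta_mx (inord k) 0.

Definition nlam_upper (lam : Rdefinitions.R) (i j : nat) : 'cV[Rdefinitions.R]_7 :=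
  match i, j with
  | 0, 1 => e7 3
  | 0, 2 => e7 5
  | 0, 3 => e7 4
  | 0, 4 => e7 6
  | 1, 2 => lam *: e7 4
  | 1, 3 => e7 5
  | 1, 5 => e7 6
  | 2, 3 => (1 - lam) *: e7 6
  | _, _ => 0
  end.

Definition n_lambda (lam : Rdefinitions.R) (i j : 'I_7) : 'cV[Rdefinitions.R]_7 :=
  if (i < j)%N then nlam_upper lam i j
  else if (j < i)%N then - nlam_upper lam j i else 0.

From HB Require Import structures.
From mathcomp Require Import all_boot all_order all_algebra ring Rstruct.
From Stdlib Require Reals Lra Psatz.

(* Make e_1, ..., e_7 orthogonal with |e_k|^2 = g_k.  Then the Ricci operator of
   n_lambda is diagonal, Ric e_k = rho_k e_k, where rho_k is half the sum of the
   squared norms Y = |[X_i, X_j]|^2 (X_i = e_i / |e_i|) of the brackets landing on e_k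
   minus half the sum of those of the brackets involving e_k.  With the derivation
   D = diag(2,2,4,4,6,6,8), the condition Ric = c + D is linear in the eight Y's and is
   solved, with c = -11/2, by Y = (m+1, q, 2, p+1, p, 2, q+1, m) whenever p + q + m = 3.
   An explicit diagonal metric realises these Y's as soon as
   p (p + 1) = lambda^2 q (q + 1) and m (m + 1) = (1 - lambda)^2 q (q + 1); taking for
   p and m the nonnegative roots of these quadratics, the intermediate value theorem
   provides q > 0 with p + q + m = 3. *)

Module SolitonParameters.
Import Reals Lra Psatz.
Local Open Scope R_scope.

Definition quad_root (a q : R) : R := (sqrt (1 + 4 * a^2 * (q * (q + 1))) - 1) / 2.

Lemma quad_root_spec a q : 0 <= q ->
  0 <= quad_root a q /\ quad_root a q * (quad_root a q + 1) = a^2 * q * (q + 1).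
Proof.
intro hq; unfold quad_root.
set (t := 1 + 4 * a ^ 2 * (q * (q + 1))).
assert (ht : 1 <= t) by (unfold t; pose proof (pow2_ge_0 a); nra).
pose proof (sqrt_sqrt t ltac:(lra)).
assert (1 <= sqrt t) by (rewrite <- sqrt_1; apply sqrt_le_1_alt; lra).
split; [lra | unfold t in *; nra].
Qed.

Lemma quad_root_pos a q : 0 < q -> a <> 0 -> 0 < quad_root a q.
Proof.
intros hq ha; unfold quad_root.
assert (0 < a^2) by (pose proof (Rsqr_pos_lt a ha); unfold Rsqr in *; nra).
assert (Hs : sqrt 1 < sqrt (1 + 4 * a ^ 2 * (q * (q + 1)))) by (apply sqrt_lt_1_alt; nra).
rewrite sqrt_1 in Hs; lra.
Qed.

Lemma quad_root0 a : quad_root a 0 = 0.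
Proof.
unfold quad_root; replace (1 + 4 * a ^ 2 * (0 * (0 + 1))) with 1 by ring.
rewrite sqrt_1; lra.
Qed.

Lemma quad_root_continuous a q : 0 <= q -> continuity_pt (quad_root a) q.
Proof.
intro hq; unfold quad_root.
apply continuity_pt_div; [| apply continuity_pt_const; now intros u v | lra].
apply continuity_pt_minus; [| apply continuity_pt_const; now intros u v].
apply (continuity_pt_comp (fun q => 1 + 4 * a^2 * (q * (q + 1))) sqrt); [reg |].
apply sqrt_continuity_pt; pose proof (pow2_ge_0 a); nra.
Qed.

(* [1 + 1 + 1] and [lam * lam] are convertible to their MathComp counterparts,
   unlike [3] and [lam ^ 2]. *)
Lemma soliton_params_R (lam : R) : exists p q m : R,
  0 <= p /\ 0 < q /\ 0 <= m /\ p + q + m = 1 + 1 + 1 /\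
  p * (p + 1) = lam * lam * (q * (q + 1)) /\
  m * (m + 1) = (1 - lam) * (1 - lam) * (q * (q + 1)).
Proof.
set (f q := quad_root lam q + q + quad_root (1 - lam) q - 3).
assert (fc : forall q, 0 <= q <= 3 -> continuity_pt f q).
{ intros q hq; unfold f.
  apply continuity_pt_minus; [| apply continuity_pt_const; now intros u v].
  repeat apply continuity_pt_plus; try (apply quad_root_continuous; lra).
  apply derivable_continuous_pt, derivable_pt_id. }
assert (f0 : f 0 < 0) by (unfold f; rewrite !quad_root0; lra).
assert (f3 : 0 < f 3).
{ unfold f; destruct (Req_dec lam 0) as [h|h].
  - assert (0 < quad_root (1 - lam) 3) by (apply quad_root_pos; lra).
    destruct (quad_root_spec lam 3) as [? _]; lra.
  - assert (0 < quad_root lam 3) by (apply quad_root_pos; lra).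
    destruct (quad_root_spec (1 - lam) 3) as [? _]; lra. }
destruct (Ranalysis5.IVT_interv f 0 3 fc ltac:(lra) f0 f3) as [q [[hq0 hq3] hq]].
assert (qpos : 0 < q) by (destruct (Rle_lt_or_eq_dec 0 q hq0); [easy | subst; lra]).
destruct (quad_root_spec lam q) as [hp1 hp2]; [lra |].
destruct (quad_root_spec (1 - lam) q) as [hm1 hm2]; [lra |].
exists (quad_root lam q), q, (quad_root (1 - lam) q).
unfold f in hq; repeat split; lra.
Qed.

End SolitonParameters.

Set Implicit Arguments. Unset Strict Implicit. Unset Printing Implicit Defensive.
Import Order.TTheory GRing.Theory Num.Theory.
Local Open Scope ring_scope.

Section DiagonalMetric.
Variables (F : realFieldType) (n : nat).
Variable br : 'I_n -> 'I_n -> 'cV[F]_n.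
Variable g : 'I_n -> F.

Definition diag_metric : 'M[F]_n := diag_mx (\row_i g i).

Definition struct_const (a b k : 'I_n) : F := br a b k 0.

(* Koszul's formula in the basis e_i, orthogonal for [diag_metric]:
   nabla_(e_a) e_b = \sum_k christoffel a b k e_k. *)
Definition christoffel (a b k : 'I_n) : F :=
  2^-1 * (struct_const a b k - (g k)^-1 * g b * struct_const a k b
          - (g k)^-1 * g a * struct_const b k a).

Lemma sum_delta_coord (j : 'I_n) (f : 'I_n -> F) :
  \sum_a (delta_mx j 0 : 'cV[F]_n) a 0 * f a = f j.
Proof.
rewrite (bigD1 j) //= big1 ?addr0; first by rewrite mxE !eqxx mul1r.
by move=> a /negbTE naj; rewrite mxE naj mul0r.
Qed.

Lemma sum_scaled_delta_coord (j : 'I_n) (c : F) (f : 'I_n -> F) :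
  \sum_b c * (delta_mx j 0 : 'cV[F]_n) b 0 * f b = c * f j.
Proof.
under eq_bigr => b _ do rewrite -mulrA.
by rewrite -mulr_sumr sum_delta_coord.
Qed.

Lemma coordD (u v : 'cV[F]_n) k : (u + v) k 0 = u k 0 + v k 0.
Proof. by rewrite !mxE. Qed.

Lemma coordB (u v : 'cV[F]_n) k : (u - v) k 0 = u k 0 - v k 0.
Proof. by rewrite !mxE. Qed.

Lemma coordZ c (u : 'cV[F]_n) k : (c *: u) k 0 = c * u k 0.
Proof. by rewrite mxE. Qed.

Lemma lie_coord x y k :
  lie br x y k 0 = \sum_a \sum_b x a 0 * y b 0 * struct_const a b k.
Proof.
rewrite /lie summxE; apply: eq_bigr => a _; rewrite summxE.
by apply: eq_bigr => b _; rewrite mxE.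
Qed.

Section NonDegenerate.
Hypothesis g_neq0 : forall i, g i != 0.

Lemma invmx_diag_metric : invmx diag_metric = diag_mx (\row_i (g i)^-1).
Proof.
have GV : diag_metric *m diag_mx (\row_i (g i)^-1) = 1%:M.
  rewrite mulmx_diag -diag_const_mx; congr diag_mx.
  by apply/matrixP=> i j; rewrite !mxE divff // ord1.
have [G_unit _] := mulmx1_unit GV.
by rewrite -[RHS]mul1mx -(mulVmx G_unit) -mulmxA GV mulmx1.
Qed.

Lemma ad_adj_coord x y k : ad_adj br diag_metric x y k 0 =
  \sum_a \sum_b x a 0 * y b 0 * ((g k)^-1 * g b * struct_const a k b).
Proof.
rewrite /ad_adj invmx_diag_metric mul_diag_mx /diag_metric mul_mx_diag mxE.
under eq_bigr => l _ do rewrite !mxE lie_coord.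
under eq_bigr => l _ do under eq_bigr => a _ do rewrite sum_scaled_delta_coord.
under eq_bigr => l _ do rewrite mulr_sumr !mulr_suml.
rewrite exchange_big /=; apply: eq_bigr => a _.
by apply: eq_bigr => b _; ring.
Qed.

Lemma nabla_coord x y k : nabla br diag_metric x y k 0 =
  \sum_a \sum_b x a 0 * y b 0 * christoffel a b k.
Proof.
rewrite /nabla coordZ !coordB lie_coord !ad_adj_coord [X in _ - X]exchange_big /=.
rewrite -!sumrB mulr_sumr; apply: eq_bigr => a _.
rewrite -!sumrB mulr_sumr; apply: eq_bigr => b _.
by rewrite /christoffel; ring.
Qed.

Lemma nabla_basisl a y k :
  nabla br diag_metric (delta_mx a 0) y k 0 = \sum_b y b 0 * christoffel a b k.
Proof.
rewrite nabla_coord; under eq_bigr => c _ do under eq_bigr => b _ do rewrite -mulrA.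
under eq_bigr => c _ do rewrite -mulr_sumr.
by rewrite sum_delta_coord.
Qed.

Lemma nabla_basis a b k :
  nabla br diag_metric (delta_mx a 0) (delta_mx b 0) k 0 = christoffel a b k.
Proof. by rewrite nabla_basisl sum_delta_coord. Qed.

Lemma ric_basis j i : ric br diag_metric (delta_mx j 0) (delta_mx i 0) =
  \sum_l (\sum_b christoffel j i b * christoffel l b l
          - \sum_b christoffel l i b * christoffel j b l
          - \sum_a struct_const l j a * christoffel a i l).
Proof.
rewrite /ric; apply: eq_bigr => l _.
rewrite /curv !coordB !nabla_basisl nabla_coord.
under [X in _ - X]eq_bigr => a _ do rewrite sum_scaled_delta_coord.
congr (_ - _ - _); apply: eq_bigr => b _; rewrite ?nabla_basis //.
rewrite lie_coord; under eq_bigr => a _ do rewrite sum_scaled_delta_coord.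
by rewrite sum_delta_coord.
Qed.

Lemma ricci_op_diag_metric : ricci_op br diag_metric =
  \matrix_(i, j) ((g i)^-1 * ric br diag_metric (delta_mx j 0) (delta_mx i 0)).
Proof.
by rewrite /ricci_op invmx_diag_metric mul_diag_mx; apply/matrixP => i j; rewrite !mxE.
Qed.

End NonDegenerate.

Lemma diag_metric_inner_product : (forall i, 0 < g i) -> is_inner_product diag_metric.
Proof.
move=> g_gt0; split; first by rewrite /diag_metric tr_diag_mx.
move=> x x_neq0.
have [i xi_neq0] : exists i, x i 0 != 0.
  apply/existsP; apply: contraR x_neq0 => /existsPn x0.
  by apply/eqP/matrixP => a c; rewrite (ord1 c) mxE; apply/eqP/negPn/x0.
rewrite /ip mul_mx_diag mxE (bigD1 i) //= !mxE.
apply: (@lt_le_trans _ _ (x i 0 * g i * x i 0)).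
  by rewrite mulrAC -expr2 mulr_gt0 // lt0r sqr_ge0 andbT expf_neq0.
rewrite lerDl sumr_ge0 // => a _.
by rewrite !mxE mulrAC -expr2 mulr_ge0 ?sqr_ge0 ?ltW.
Qed.

Lemma derivation_diag_mx (d : 'I_n -> F) :
  (forall a b k, struct_const a b k * (d k - d a - d b) = 0) ->
  is_derivation br (diag_mx (\row_i d i)).
Proof.
move=> dC x y; apply/matrixP => k c; rewrite (ord1 c).
have dE (v : 'cV[F]_n) a : (diag_mx (\row_i d i) *m v) a 0 = d a * v a 0.
  by rewrite mul_diag_mx !mxE.
rewrite coordD dE !lie_coord.
under [X in _ = X + _]eq_bigr => a _ do under eq_bigr => b _ do rewrite dE.
under [X in _ = _ + X]eq_bigr => a _ do under eq_bigr => b _ do rewrite dE.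
rewrite -big_split mulr_sumr /=; apply: eq_bigr => a _.
rewrite -big_split mulr_sumr /=; apply: eq_bigr => b _.
apply/eqP; rewrite -subr_eq0; apply/eqP.
transitivity (x a 0 * y b 0 * (struct_const a b k * (d k - d a - d b))); first by ring.
by rewrite dC mulr0.
Qed.

End DiagonalMetric.

Notation R := Rdefinitions.R.

Definition nlam_upper_coef (lam : R) (a b k : nat) : R :=
  match a, b, k with
  | 0, 1, 3 | 0, 2, 5 | 0, 3, 4 | 0, 4, 6 | 1, 3, 5 | 1, 5, 6 => 1
  | 1, 2, 4 => lam
  | 2, 3, 6 => 1 - lam
  | _, _, _ => 0
  end.

Definition nlam_coef (lam : R) (a b k : nat) : R :=
  if (a < b)%N then nlam_upper_coef lam a b k
  else if (b < a)%N then - nlam_upper_coef lam b a k else 0.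

Lemma nlam_upper_coord lam (a b : nat) (k : 'I_7) :
  nlam_upper lam a b k 0 = nlam_upper_coef lam a b k.
Proof.
have e7E x (i : 'I_7) : (x < 7)%N -> e7 x i 0 = (i == x :> nat)%:R.
  by move=> x_lt7; rewrite /e7 mxE -val_eqE /= inordK // eqxx andbT.
rewrite /nlam_upper /nlam_upper_coef.
case: a => [|[|[|a]]]; case: b => [|[|[|[|[|[|b]]]]]]; rewrite ?coordZ ?e7E // ?mxE //;
  by case: k => [[|[|[|[|[|[|[|k]]]]]]] k_lt7] //=; rewrite ?mulr1 ?mulr0.
Qed.

Lemma struct_const_n_lambda lam (a b k : 'I_7) :
  struct_const (n_lambda lam) a b k = nlam_coef lam a b k.
Proof.
rewrite /struct_const /n_lambda /nlam_coef; case: ifP => _; first exact: nlam_upper_coord.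
by case: ifP => _; rewrite mxE ?nlam_upper_coord.
Qed.

Definition nlam_christoffel lam (g : nat -> R) (a b k : nat) : R :=
  2^-1 * (nlam_coef lam a b k - (g k)^-1 * g b * nlam_coef lam a k b
          - (g k)^-1 * g a * nlam_coef lam b k a).

Lemma christoffel_n_lambda lam (g : nat -> R) (a b k : 'I_7) :
  christoffel (n_lambda lam) (fun i : 'I_7 => g i) a b k = nlam_christoffel lam g a b k.
Proof. by rewrite /christoffel /nlam_christoffel !struct_const_n_lambda. Qed.

(* [bracket_sqnorm lam g b] is |[X_i, X_j]|^2 for the b-th bracket [e_i, e_j] of
   [nlam_upper], in the orthonormal frame X_i = e_i / sqrt (g i).  The [%N] keep the
   indices nat literals: in ring_scope [3 : nat] would be [3%:R]. *)
Definition bracket_sqnorm lam (g : nat -> R) (b : nat) : R :=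
  match b with
  | 0 => g 3%N / (g 0%N * g 1%N)
  | 1 => g 5%N / (g 0%N * g 2%N)
  | 2 => g 4%N / (g 0%N * g 3%N)
  | 3 => g 6%N / (g 0%N * g 4%N)
  | 4 => lam ^+ 2 * g 4%N / (g 1%N * g 2%N)
  | 5 => g 5%N / (g 1%N * g 3%N)
  | 6 => g 6%N / (g 1%N * g 5%N)
  | 7 => (1 - lam) ^+ 2 * g 6%N / (g 2%N * g 3%N)
  | _ => 0
  end.

Definition ric_eigen lam (g : nat -> R) (k : nat) : R :=
  let Y := bracket_sqnorm lam g in
  match k with
  | 0 => - (Y 0%N + Y 1%N + Y 2%N + Y 3%N) / 2
  | 1 => - (Y 0%N + Y 4%N + Y 5%N + Y 6%N) / 2
  | 2 => - (Y 1%N + Y 4%N + Y 7%N) / 2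
  | 3 => (Y 0%N - Y 2%N - Y 5%N - Y 7%N) / 2
  | 4 => (Y 2%N + Y 4%N - Y 3%N) / 2
  | 5 => (Y 1%N + Y 5%N - Y 6%N) / 2
  | 6 => (Y 3%N + Y 6%N + Y 7%N) / 2
  | _ => 0
  end.

Lemma ric_n_lambda_nat lam (g : nat -> R) (i j : 'I_7) : (forall k, g k != 0) ->
  ric (n_lambda lam) (diag_metric (fun i : 'I_7 => g i)) (delta_mx j 0) (delta_mx i 0) =
  \sum_(0 <= l < 7) (\sum_(0 <= b < 7) nlam_christoffel lam g j i b * nlam_christoffel lam g l b l
    - \sum_(0 <= b < 7) nlam_christoffel lam g l i b * nlam_christoffel lam g j b l
    - \sum_(0 <= a < 7) nlam_coef lam l j a * nlam_christoffel lam g a i l).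
Proof.
move=> g_neq0; rewrite ric_basis // big_mkord; apply: eq_bigr => l _.
by rewrite !big_mkord; congr (_ - _ - _); apply: eq_bigr => b _;
  rewrite ?christoffel_n_lambda ?struct_const_n_lambda.
Qed.

Lemma ric_n_lambda lam (g : nat -> R) (i j : 'I_7) : (forall k, g k != 0) ->
  ric (n_lambda lam) (diag_metric (fun i : 'I_7 => g i)) (delta_mx j 0) (delta_mx i 0) =
  if i == j then g i * ric_eigen lam g i else 0.
Proof.
move=> g_neq0; rewrite ric_n_lambda_nat //.
case: i => [[|[|[|[|[|[|[|i]]]]]]] ?] //; case: j => [[|[|[|[|[|[|[|j]]]]]]] ?] //;
  rewrite unlock /= /nlam_christoffel /nlam_coef /nlam_upper_coef /ric_eigen /bracket_sqnorm /=;
  field; rewrite ?g_neq0 ?pnatr_eq0 //.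
Qed.

Definition soliton_weight (k : nat) : R :=
  match k with 0 | 1 => 2 | 2 | 3 => 4 | 4 | 5 => 6 | _ => 8 end.

Lemma derivation_soliton_weight lam :
  is_derivation (n_lambda lam) (diag_mx (\row_i soliton_weight i)).
Proof.
apply: derivation_diag_mx => a b k; rewrite struct_const_n_lambda.
case: a => [[|[|[|[|[|[|[|a]]]]]]] ?] //; case: b => [[|[|[|[|[|[|[|b]]]]]]] ?] //;
  case: k => [[|[|[|[|[|[|[|k]]]]]]] ?] //;
  rewrite /nlam_coef /nlam_upper_coef /soliton_weight /= ?oppr0 ?mul0r //; ring.
Qed.

Definition soliton_scale (p q : R) : R := Num.sqrt ((p + 1) / (q + 1)).

(* Chosen so that the squared bracket norms become m+1, q, 2, p+1, p, 2, q+1, m. *)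
Definition soliton_metric (p q m : R) (k : nat) : R :=
  let r := soliton_scale p q in
  match k with
  | 0 => 1 | 1 => r | 2 => 2 * (m + 1) * r ^+ 2 / q | 3 => (m + 1) * r
  | 4 => 2 * (m + 1) * r | 5 => 2 * (m + 1) * r ^+ 2
  | _ => 2 * (m + 1) * (p + 1) * r
  end.

Lemma soliton_params (lam : R) : exists p q m : R,
  [/\ 0 <= p, 0 < q, 0 <= m & p + q + m = 3] /\
  p * (p + 1) = lam ^+ 2 * (q * (q + 1)) /\ m * (m + 1) = (1 - lam) ^+ 2 * (q * (q + 1)).
Proof.
have [p [q [m [p_ge0 [q_gt0 [m_ge0 [pqm_sum [p_eq m_eq]]]]]]]] := SolitonParameters.soliton_params_R lam.
exists p, q, m; split; last by rewrite !expr2; split.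
split; [exact/RleP | exact/RltP | exact/RleP |].
have pqm_sum' : p + q + m = 1 + 1 + 1 := pqm_sum.
rewrite pqm_sum'; ring.
Qed.

Section Soliton.
Variables (lam p q m : R).
Hypotheses (p_ge0 : 0 <= p) (q_gt0 : 0 < q) (m_ge0 : 0 <= m).
Hypothesis pqm_sum : p + q + m = 3.
Hypothesis p_eq : p * (p + 1) = lam ^+ 2 * (q * (q + 1)).
Hypothesis m_eq : m * (m + 1) = (1 - lam) ^+ 2 * (q * (q + 1)).

Let g := soliton_metric p q m.
Let r := soliton_scale p q.

Let p1_gt0 : 0 < p + 1. Proof. by rewrite ltr_wpDl. Qed.
Let q1_gt0 : 0 < q + 1. Proof. by rewrite ltr_wpDl // ltW. Qed.
Let m1_gt0 : 0 < m + 1. Proof. by rewrite ltr_wpDl. Qed.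

Lemma soliton_scale_gt0 : 0 < r.
Proof. by rewrite sqrtr_gt0 divr_gt0. Qed.

Lemma soliton_scale_sqr : r ^+ 2 = (p + 1) / (q + 1).
Proof. by rewrite sqr_sqrtr // divr_ge0 // ltW. Qed.

Lemma soliton_metric_gt0 k : 0 < g k.
Proof.
have r_gt0 := soliton_scale_gt0.
by case: k => [|[|[|[|[|[|k]]]]]];
  rewrite /g /soliton_metric -/r ?ltr01 ?mulr_gt0 ?exprn_gt0 ?invr_gt0 ?ltr0n.
Qed.

Local Ltac field_pos := field; rewrite ?gt_eqF ?soliton_scale_gt0 ?ltr0n //.

Lemma bracket_sqnorm_soliton b : (b < 8)%N ->
  bracket_sqnorm lam g b = [:: m + 1; q; 2; p + 1; p; 2; q + 1; m]`_b.
Proof.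
case: b => [|[|[|[|[|[|[|[|b]]]]]]]] //= _; rewrite /g /soliton_metric -/r.
- by field_pos.
- by field_pos.
- by field_pos.
- by field_pos.
- transitivity (lam ^+ 2 * q / r ^+ 2); first by field_pos.
  rewrite soliton_scale_sqr.
  transitivity (lam ^+ 2 * (q * (q + 1)) / (p + 1)); first by field_pos.
  by rewrite -p_eq mulfK // gt_eqF.
- by field_pos.
- transitivity ((p + 1) / r ^+ 2); first by field_pos.
  by rewrite soliton_scale_sqr; field_pos.
- transitivity ((1 - lam) ^+ 2 * (p + 1) * q / ((m + 1) * r ^+ 2)); first by field_pos.
  rewrite soliton_scale_sqr.
  transitivity ((1 - lam) ^+ 2 * (q * (q + 1)) / (m + 1)); first by field_pos.
  by rewrite -m_eq mulfK // gt_eqF.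
Qed.

Lemma ric_eigen_soliton k : (k < 7)%N -> ric_eigen lam g k = - (11 / 2) + soliton_weight k.
Proof.
have m_def : m = 3 - p - q by rewrite -pqm_sum; ring.
case: k => [|[|[|[|[|[|[|k]]]]]]] // _;
  rewrite /ric_eigen !bracket_sqnorm_soliton //= ?m_def; by field.
Qed.

Lemma ricci_op_soliton : ricci_op (n_lambda lam) (diag_metric (fun i : 'I_7 => g i)) =
  (- (11 / 2))%:M + diag_mx (\row_i soliton_weight i).
Proof.
have g_neq0 k : g k != 0 by rewrite gt_eqF ?soliton_metric_gt0.
rewrite ricci_op_diag_metric //; apply/matrixP => i j; rewrite !mxE ric_n_lambda //.
have [->|_] := eqVneq i j; last by rewrite mulr0 !mulr0n addr0.
by rewrite mulKf // ric_eigen_soliton // !mulr1n.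
Qed.

End Soliton.

Theorem mainTheorem20 (lam : Rdefinitions.R) :
  einstein_nilradical (n_lambda lam).
Proof.
have [p [q [m [[p_ge0 q_gt0 m_ge0 pqm_sum] [p_eq m_eq]]]]] := soliton_params lam.
exists (diag_metric (fun i : 'I_7 => soliton_metric p q m i)); split.
  by apply: diag_metric_inner_product => i; apply: soliton_metric_gt0.
exists (- (11 / 2)), (diag_mx (\row_i soliton_weight i)).
by split; [exact: derivation_soliton_weight | exact: ricci_op_soliton].
Qed.
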